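(* Assume $f^*$ is additive. Suppose $\pi_g,\pi_p>0$, and suppose the proposal contains a trivial move (returning the current state) that is selected with some probability $\pi_0>0$. Suppose $p_{\mathrm{TSE}}$ has full support, and let $m,\sigma^2,\lambda$ be arbitrary. If $r\ge\mathrm{diam}(\Omega_{\mathrm{TSE},m})$, then for any tolerance $\varepsilon>0$, the lazification of the Markov chain induced by BART+ with $r$-step proposals and temperature $T=1$ has $\varepsilon$-mixing time satisfying $$t_{\mathrm{mix}}(\varepsilon)=O_{\mathbb P}(1).$$
   Context: Data: $\mathcal X=\{1,\dots,B\}^d$; $\nu$ a full-support probability measure on $\mathcal X$; $\epsilon$ a (centered) sub-Gaussian random variable; training data are $n$ i.i.d. pairs $(\mathbf x_i,y_i)$, $\mathbf x_i\sim\nu$, $y_i=f^*(\mathbf x_i)+\epsilon_i$, noise independent of covariates; $\mathbb P_n$ is probability over the data. $f^*$ is additive if $f^*(\mathbf x)=f_1(x_1)+\cdots+f_{m'}(x_{m'})$ for some $2\le m'\le d$ and univariate $f_i$. Trees: a tree structure is a finite rooted binary tree with axis-aligned splitting rules at internal nodes (children $\{x_v\le t\}$, $\{x_v>t\}$ of the parent's cell, both nonempty). $\Omega_{\mathrm{TSE},m}$ is the finite set of TSEs $\mathfrak E=(\mathfrak T_1,\dots,\mathfrak T_m)$. Bayesian model: given $\mathfrak E$ with $b$ leaves, $\boldsymbol\Psi$ is the $n\times b$ leaf-indicator matrix over training points, $\boldsymbol\mu\sim N(0,(\sigma^2/\lambda)\mathbf I_b)$, $\mathbf y=\boldsymbol\Psi\boldsymbol\mu+\mathbf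 e$, $\mathbf e\sim N(0,\sigma^2\mathbf I_n)$; prior $p=p_{\mathrm{TSE}}$; marginal likelihood $p(\mathbf y\mid\mathfrak E)$; posterior $p(\mathfrak E\mid\mathbf y)\propto p(\mathbf y\mid\mathfrak E)p(\mathfrak E)$. Proposal: on tree structures, with probabilities $\pi_g,\pi_p,\pi_c,\pi_s$ (and here also a trivial move with probability $\pi_0$) propose grow (split a leaf), prune (collapse two sibling leaves), change (change an internal node's rule), or swap (swap rules of a parent–child pair of internal nodes, or if both children share a rule, swap parent's rule with both children's), choices uniform, empty leaves disallowed. On ensembles, $Q(\mathfrak E,\mathfrak E')$ is the probability of proposing $\mathfrak E'$ from $\mathfrak E$ by choosing a tree index uniformly at random and applying the tree proposal to that tree. $Q^r(\mathfrak E,\mathfrak E')=\sum_{\mathfrak E_1,\dots,\mathfrak E_{r-1}}Q(\mathfrak E,\mathfrak E_1)\prod_{i=2}^{r-1}Q(\mathfrak E_{i-1},\mathfrak E_i)Q(\mathfrak E_{r-1},\mathfrak E')$ is the $r$-step proposal. $\mathrm{diam}(\Omega_{\mathrm{TSE},m})$ is the diameter of the graph on $\Omega_{\mathrm{TSE},m}$ with an edge between $\mathfrak E,\mathfrak E'$ when $Q(\mathfrak E,\mathfrak E')>0$. BART+ with $r$ steps and temperature $T$: Markov chain on $\Omega_{\mathrm{TSE},m}$ with transition matrix $P$ that proposes $\mathfrak E'\sim Q^r(\mathfrak E,\cdot)$ and accepts with probability $\min\big\{\frac{Q^r(\mathfrak E',\mathfrak E)p(\mathfrak E')}{Q^r(\mathfrak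 E,\mathfrak E')p(\mathfrak E)}\big(\frac{p(\mathbf y\mid\mathfrak E')}{p(\mathbf y\mid\mathfrak E)}\big)^{1/T},1\big\}$. Its lazification has transition matrix $\tilde P=(P+I)/2$; with stationary distribution $\pi$, $t_{\mathrm{mix}}(\varepsilon)=\min\{t\ge0:\max_x\|\tilde P^t(x,\cdot)-\pi\|_{\mathrm{TV}}\le\varepsilon\}$. $a_n=O_{\mathbb P}(b_n)$: for every $0<\delta<1$ there are $N,C>0$ with $\sup_{n>N}\mathbb P_n\{|a_n/b_n|>C\}<\delta$. *)

From HB Require Import structures.
From mathcomp Require Import all_boot all_order all_algebra.
From mathcomp Require Import all_classical all_reals all_analysis.
Set Implicit Arguments. Unset Strict Implicit. Unset Printing Implicit Defensive.
Import Order.TTheory GRing.Theory Num.Theory.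
Local Open Scope ring_scope.

Section Trees.
Variables (d B : nat).

(* X = {1,...,B}^d, coordinate values encoded as 0,...,B-1. *)
Definition covpt : finType := {ffun 'I_d -> 'I_B}.

Definition rule : finType := ('I_d * 'I_B)%type.

(* A tree structure is encoded in heap layout: node k (k >= 1) has children
   2k (left, x_v <= t) and 2k+1 (right, x_v > t); the root is node 1.
   The label of a node is Some rule if it is an internal node, None otherwise.
   Depths up to d*B are available, which suffices since a tree with
   nonempty cells over X has depth at most d*(B-1). *)
Definition depth_bound : nat := (d * B)%N.
Definition npos : nat := (2 ^ depth_bound.+1)%N.
Definition pos : finType := 'I_npos.
Definition tree : finType := {ffun pos -> option rule}.

Definition lab (T : tree) (k : nat) : option rule :=
  oapp T None (insub k : option pos).

Definition internal (T : tree) (k : nat) : bool := lab T k != None.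

Definition present (T : tree) (k : nat) : bool :=
  (k == 1)%N || ((1 < k)%N && internal T k./2).

Definition is_leaf (T : tree) (k : nat) : bool := present T k && ~~ internal T k.

Definition wf_tree (T : tree) : bool :=
  (lab T 0 == None) &&
  [forall i : pos, internal T i ==> present T i && (i.*2.+1 < npos)%N].

Definition rule_side (o : option rule) (x : covpt) (right : bool) : bool :=
  match o with
  | Some (v, t) => if right then (nat_of_ord t < nat_of_ord (x v))%N
                   else (nat_of_ord (x v) <= nat_of_ord t)%N
  | None => true
  end.

(* cell of node k: intersection of the half-spaces along the root-to-k path *)
Definition cell (T : tree) (k : nat) (x : covpt) : bool :=
  [forall j : 'I_depth_bound.+1,
     let a := (k %/ 2 ^ j.+1)%N in
     (0 < a)%N ==> rule_side (lab T a) x (odd (k %/ 2 ^ j))].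

(* a tree structure: well formed, every node has a nonempty cell
   (equivalently, both children of every internal node are nonempty) *)
Definition valid_tree (T : tree) : bool :=
  wf_tree T && [forall i : pos, present T i ==> [exists x, cell T i x]].

Definition upd (T : tree) (i : pos) (o : option rule) : tree :=
  [ffun j => if j == i then o else T j].

Variable R : realType.

(* choose a ∈ A uniformly, then move according to K a;
   if no choice is available, the proposal returns the current tree *)
Definition unifK (I : finType) (T : tree) (A : {set I}) (K : I -> tree -> R)
  (T' : tree) : R :=
  if #|A| == 0%N then (T' == T)%:R
  else #|A|%:R^-1 * \sum_(a in A) K a T'.

Definition grow_rules (T : tree) (i : pos) : {set rule} :=
  [set rho : rule | valid_tree (upd T i (Some rho))].
Definition grow_nodes (T : tree) : {set pos} :=
  [set i : pos | is_leaf T i && (#|grow_rules T i| != 0%N)].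
Definition growQ (T T' : tree) : R :=
  unifK T (grow_nodes T)
    (fun i => unifK T (grow_rules T i) (fun rho T'' => (upd T i (Some rho) == T'')%:R)) T'.

Definition prune_nodes (T : tree) : {set pos} :=
  [set i : pos | [&& internal T i, ~~ internal T i.*2 & ~~ internal T i.*2.+1]].
Definition pruneQ (T T' : tree) : R :=
  unifK T (prune_nodes T) (fun i T'' => (upd T i None == T'')%:R) T'.

Definition change_rules (T : tree) (i : pos) : {set rule} :=
  [set rho : rule | (Some rho != T i) && valid_tree (upd T i (Some rho))].
Definition change_nodes (T : tree) : {set pos} :=
  [set i : pos | internal T i && (#|change_rules T i| != 0%N)].
Definition changeQ (T T' : tree) : R :=
  unifK T (change_nodes T)
    (fun i => unifK T (change_rules T i) (fun rho T'' => (upd T i (Some rho) == T'')%:R)) T'.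

(* swap: k = 0 (swap with left child), 1 (with right child),
   2 (both children share a rule: swap parent's rule with both children's) *)
Definition swapres (T : tree) (i : pos) (k : 'I_3) : tree :=
  let l := (i.*2)%N in let r := (i.*2.+1)%N in
  [ffun j : pos =>
     match nat_of_ord k with
     | 0 => if nat_of_ord j == nat_of_ord i then lab T l
            else if nat_of_ord j == l then T i else T j
     | 1 => if nat_of_ord j == nat_of_ord i then lab T r
            else if nat_of_ord j == r then T i else T j
     | _ => if nat_of_ord j == nat_of_ord i then lab T l
            else if (nat_of_ord j == l) || (nat_of_ord j == r) then T i else T j
     end].
Definition swap_ok (T : tree) (i : pos) (k : 'I_3) : bool :=
  let l := (i.*2)%N in let r := (i.*2.+1)%N in
  let same := [&& internal T l, internal T r & lab T l == lab T r] in
  [&& internal T i, valid_tree (swapres T i k) &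
     match nat_of_ord k with
     | 0 => internal T l && ~~ same
     | 1 => internal T r && ~~ same
     | _ => same
     end].
Definition swap_opts (T : tree) : {set pos * 'I_3} :=
  [set p : pos * 'I_3 | swap_ok T p.1 p.2].
Definition swapQ (T T' : tree) : R :=
  unifK T (swap_opts T) (fun p T'' => (swapres T p.1 p.2 == T'')%:R) T'.

Definition treeQ (pi0 pig pip pic pis : R) (T T' : tree) : R :=
  pi0 * (T' == T)%:R + pig * growQ T T' + pip * pruneQ T T'
  + pic * changeQ T T' + pis * swapQ T T'.

Definition ens (m : nat) : finType := {ffun 'I_m -> tree}.

Definition OmegaTSE (m : nat) : {set ens m} :=
  [set E : ens m | [forall j, valid_tree (E j)]].

Definition ensQ (m : nat) (pi0 pig pip pic pis : R) (E E' : ens m) : R :=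
  m%:R^-1 * \sum_(j < m)
    treeQ pi0 pig pip pic pis (E j) (E' j) *
    [forall k : 'I_m, (k != j) ==> (E k == E' k)]%:R.

Definition PsiPsiT (m n : nat) (E : ens m) (xd : 'I_n -> covpt) : 'M[R]_n :=
  \matrix_(i, i') \sum_(j < m) \sum_(l : pos | is_leaf (E j) l)
     (cell (E j) l (xd i) && cell (E j) l (xd i'))%:R.

(* y ~ N(0, sigma2 I_n + (sigma2/lambda) Psi Psi^T), obtained by integrating
   mu ~ N(0, (sigma2/lambda) I_b) out of y = Psi mu + e, e ~ N(0, sigma2 I_n) *)
Definition marg_cov (m n : nat) (sigma2 lambda : R) (E : ens m)
  (xd : 'I_n -> covpt) : 'M[R]_n :=
  sigma2 *: 1%:M + (sigma2 / lambda) *: PsiPsiT E xd.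

Definition marglik (m n : nat) (sigma2 lambda : R) (E : ens m)
  (xd : 'I_n -> covpt) (yd : 'I_n -> R) : R :=
  let S := marg_cov sigma2 lambda E xd in
  let y : 'cV[R]_n := \col_i yd i in
  (Num.sqrt (2 * pi)) ^- n * (Num.sqrt (\det S))^-1 *
  expR (- ((y^T *m invmx S *m y) 0 0) / 2).

End Trees.

Section Chains.
Variables (R : realType) (S : finType) (Om : {set S}).

Definition kcomp (K L : S -> S -> R) : S -> S -> R :=
  fun x z => \sum_(y in Om) K x y * L y z.

Definition kid : S -> S -> R := fun x y => (x == y)%:R.

Definition kpow (K : S -> S -> R) (t : nat) : S -> S -> R := iter t (kcomp K) kid.

Definition kedge (K : S -> S -> R) (x y : S) : Prop := 0 < K x y \/ 0 < K y x.

Fixpoint kwalk (K : S -> S -> R) (k : nat) (x y : S) : Prop :=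
  match k with
  | 0 => x = y
  | k'.+1 => exists z, z \in Om /\ kedge K x z /\ kwalk K k' z y
  end.

Definition diam_le (K : S -> S -> R) (r : nat) : Prop :=
  forall x y, x \in Om -> y \in Om -> exists2 k, (k <= r)%N & kwalk K k x y.

Definition tv (p q : S -> R) : R := 2^-1 * \sum_(y in Om) `|p y - q y|.

(* t_mix(eps) <= C  (t_mix = min {t | max_x ||K^t(x,.) - pi||_TV <= eps}) *)
Definition tmix_le (K : S -> S -> R) (pi : S -> R) (eps C : R) : Prop :=
  exists t : nat, t%:R <= C /\ forall x, x \in Om -> tv (kpow K t x) pi <= eps.

Definition mh_accept (Qr : S -> S -> R) (p L : S -> R) (T : R) (x y : S) : R :=
  Order.min 1 ((Qr y x * p y) / (Qr x y * p x) * powR (L y / L x) T^-1).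

Definition mh_kernel (Qr : S -> S -> R) (p L : S -> R) (T : R) (x y : S) : R :=
  if x == y then
    Qr x x + \sum_(z in Om | z != x) Qr x z * (1 - mh_accept Qr p L T x z)
  else Qr x y * mh_accept Qr p L T x y.

Definition lazify (K : S -> S -> R) : S -> S -> R :=
  fun x y => (K x y + (x == y)%:R) / 2.

Definition posterior (p L : S -> R) : S -> R :=
  fun x => L x * p x / \sum_(z in Om) L z * p z.

End Chains.

Section BARTplus.
Variables (R : realType) (d B m : nat).
Variables (pi0 pig pip pic pis sigma2 lambda T : R) (prior : ens d B m -> R) (r : nat).

Definition Qr_ens : ens d B m -> ens d B m -> R :=
  kpow (OmegaTSE d B m) (ensQ pi0 pig pip pic pis) r.

Definition bartplus_lazy (n : nat) (xd : 'I_n -> covpt d B) (yd : 'I_n -> R) :=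
  lazify (mh_kernel (OmegaTSE d B m) Qr_ens prior
            (fun E => marglik sigma2 lambda E xd yd) T).

Definition bartplus_posterior (n : nat) (xd : 'I_n -> covpt d B) (yd : 'I_n -> R) :=
  posterior (OmegaTSE d B m) prior (fun E => marglik sigma2 lambda E xd yd).

End BARTplus.

Local Open Scope classical_set_scope.

Definition is_additive (R : realType) (d B : nat) (f : covpt d B -> R) : Prop :=
  exists (m' : nat) (fs : nat -> 'I_B -> R),
    (2 <= m' <= d)%N /\ forall x, f x = \sum_(i < d | (i < m')%N) fs i (x i).

Definition full_support_prob (R : realType) (X : finType) (nu : X -> R) : Prop :=
  (forall x, 0 < nu x) /\ \sum_x nu x = 1.

Definition centered_subgaussian (R : realType) (mu : probability R R) : Prop :=
  mu.-integrable setT EFin /\ (\int[mu]_x (x%:E) = 0)%E /\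
  exists s : R, 0 < s /\ forall t : R,
    (\int[mu]_x (expR (t * x))%:E <= (expR (s ^+ 2 * t ^+ 2 / 2))%:E)%E.

(* (x_i, eps_i), i = 0,1,2,..., are i.i.d. with x_i ~ nu, eps_i ~ mu independent:
   the joint law of the first n pairs is the n-fold product of nu (x) mu *)
Definition iid_design_noise (R : realType) (d B : nat) (dW : measure_display)
  (W : measurableType dW) (P : probability W R) (nu : covpt d B -> R)
  (mu : probability R R) (xs : nat -> W -> covpt d B) (es : nat -> W -> R) : Prop :=
  (forall i a, measurable [set w | xs i w = a]) /\
  (forall i, measurable_fun setT (es i)) /\
  forall (n : nat) (A : nat -> {set covpt d B}) (Bs : nat -> set R),
    (forall i, measurable (Bs i)) ->
    P (\bigcap_(i < n) ([set w | xs i w \in A i] `&` (es i @^-1` Bs i))) =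
    (\prod_(i < n) ((\sum_(x in A i) nu x)%:E * mu (Bs i)))%E.

(* Since [r >= diam], the [r]-step proposal [Q^r] is strictly positive on the
   finite state space: the support graph of the ensemble proposal is symmetric
   (grow and prune, change and change, swap and swap undo each other) and lazy
   ([pi0 > 0]), so any path of length at most [r] can be padded to length [r].
   Hence [Q^r >= q] for some [q > 0] that depends on neither [n] nor the data.
   A Metropolis-Hastings kernel with such a proposal dominates [q] times its
   target, the posterior, whatever the (positive) likelihood; its lazy version
   dominates [q/2] times it, and Doeblin's argument bounds the total variation
   distance after [t] steps by [(1 - q/2)^t].  So [t_mix(eps)] is bounded by a
   deterministic constant, and the exceptional events in [O_P(1)] are empty. *)

From HB Require Import structures.
From mathcomp Require Import all_boot all_order all_algebra.
From mathcomp Require Import all_classical all_reals all_analysis.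
From mathcomp Require Import ring lra zify.
Set Implicit Arguments. Unset Strict Implicit. Unset Printing Implicit Defensive.
Import Order.TTheory GRing.Theory Num.Theory.
Local Open Scope ring_scope.

Lemma sum_indicator (R : pzSemiRingType) (X : finType) (P : pred X) (x : X) :
  P x -> \sum_(y | P y) ((x == y)%:R : R) = 1.
Proof.
move=> Px; rewrite (bigD1 x) //= eqxx big1 ?addr0 // => y /andP[_ yx].
by rewrite eq_sym (negbTE yx).
Qed.

Lemma mulr_gt0_nnegP (R : numDomainType) (a b : R) : 0 <= a -> 0 <= b ->
  0 < a * b -> 0 < a /\ 0 < b.
Proof.
move=> a0 b0 ab; split; rewrite lt_def ?a0 ?b0 andbT.
  by apply: contraTneq ab => ->; rewrite mul0r ltxx.
by apply: contraTneq ab => ->; rewrite mulr0 ltxx.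
Qed.

Section FiniteKernels.
Variables (R : realType) (S : finType) (Om : {set S}).
Implicit Types (K : S -> S -> R) (pi : S -> R).

Lemma kpowS K t x z :
  kpow Om K t.+1 x z = \sum_(y in Om) K x y * kpow Om K t y z.
Proof. by []. Qed.

Lemma kpow_stochastic K t x :
  (forall x, x \in Om -> \sum_(y in Om) K x y = 1) ->
  x \in Om -> \sum_(y in Om) kpow Om K t x y = 1.
Proof.
move=> Ksum; elim: t x => [|t IH] x xO; first exact: sum_indicator.
under eq_bigr do rewrite kpowS.
rewrite exchange_big /= -(Ksum x xO); apply: eq_bigr => z zO.
by rewrite -big_distrr /= IH // mulr1.
Qed.

Lemma kpow_stationary K pi :
  (forall y, y \in Om -> \sum_(x in Om) pi x * K x y = pi y) ->
  forall t z, z \in Om -> \sum_(y in Om) pi y * kpow Om K t y z = pi z.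
Proof.
move=> st; elim=> [|t IH] z zO.
  rewrite (bigD1 z) //= big1 ?addr0; first by rewrite /kid eqxx mulr1.
  by move=> y /andP[_ yz]; rewrite /kid (negbTE yz) mulr0.
under eq_bigr do rewrite kpowS big_distrr /=.
rewrite exchange_big /= -[RHS]IH //; apply: eq_bigr => w wO.
by under eq_bigr do rewrite mulrA; rewrite -big_distrl /= st.
Qed.

(* Doeblin's argument: if [K x . >= beta pi], then [K^(t+1) x z - pi z] is the
   average of [K^t y z - pi z] against the sub-probability [K x . - beta pi]. *)
Lemma kpow_tv_doeblin K pi beta :
  (forall x y, x \in Om -> y \in Om -> beta * pi y <= K x y) ->
  (forall x, x \in Om -> \sum_(y in Om) K x y = 1) ->
  (forall y, y \in Om -> \sum_(x in Om) pi x * K x y = pi y) ->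
  (forall y, y \in Om -> 0 <= pi y) -> \sum_(y in Om) pi y = 1 ->
  forall t x, x \in Om -> tv Om (kpow Om K t x) pi <= (1 - beta) ^+ t.
Proof.
move=> Klb Ksum Kst pi_ge0 pi_sum t x xO; rewrite /tv ler_pdivrMl //.
have Kb x' y : x' \in Om -> y \in Om -> 0 <= K x' y - beta * pi y.
  by move=> x'O yO; rewrite subr_ge0 Klb.
elim: t x xO => [|t IH] x xO.
  apply: le_trans (ler_sum _ (fun z _ => ler_normB _ _)) _.
  rewrite big_split /= (bigD1 x) //= big1 ?addr0.
    rewrite /kid eqxx normr1 (eq_bigr _ (fun z zO => ger0_norm (pi_ge0 z zO))).
    by rewrite pi_sum; lra.
  by move=> y /andP[_ yx]; rewrite /kid eq_sym (negbTE yx) normr0.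
have step z : z \in Om -> kpow Om K t.+1 x z - pi z =
    \sum_(y in Om) (K x y - beta * pi y) * (kpow Om K t y z - pi z).
  move=> zO.
  have e1 : \sum_(y in Om) K x y * pi z = pi z by rewrite -big_distrl /= Ksum // mul1r.
  have e2 : \sum_(y in Om) beta * pi y * kpow Om K t y z = beta * pi z.
    by under eq_bigr do rewrite -mulrA; rewrite -big_distrr /= kpow_stationary.
  have e3 : \sum_(y in Om) beta * pi y * pi z = beta * pi z.
    by rewrite -big_distrl -big_distrr /= pi_sum mulr1.
  under eq_bigr do rewrite mulrBl !mulrBr.
  by rewrite !sumrB e1 e2 e3 kpowS; lra.
under eq_bigr => z zO do rewrite step //.
apply: le_trans (ler_sum _ (fun z _ => ler_norm_sum _ _ _)) _.
rewrite exchange_big /=.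
under eq_bigr => y yO.
  under eq_bigr => z zO do rewrite normrM (ger0_norm (Kb x y xO yO)).
  rewrite -big_distrr /=.
  over.
apply: le_trans (ler_sum _ (fun y yO => ler_wpM2l (Kb x y xO yO) (IH y yO))) _.
rewrite -big_distrl /= sumrB Ksum // -big_distrr /= pi_sum mulr1.
by rewrite exprS mulrCA.
Qed.

Lemma lazify_stochastic K x : x \in Om ->
  \sum_(y in Om) K x y = 1 -> \sum_(y in Om) lazify K x y = 1.
Proof.
move=> xO Ksum; rewrite /lazify -big_distrl /= big_split /= Ksum.
by rewrite sum_indicator //; lra.
Qed.

Lemma lazify_stationary K pi y : y \in Om ->
  \sum_(x in Om) pi x * K x y = pi y -> \sum_(x in Om) pi x * lazify K x y = pi y.
Proof.
move=> yO Kst; rewrite /lazify.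
under eq_bigr do rewrite mulrA mulrDr.
rewrite -big_distrl /= big_split /= Kst (bigD1 y) //= eqxx mulr1 big1 ?addr0.
  by lra.
by move=> x /andP[_ /negbTE->]; rewrite mulr0.
Qed.

Lemma lazify_ge K c x y : c <= K x y -> c / 2 <= lazify K x y.
Proof. by rewrite /lazify ler_pM2r // => /le_trans; apply; rewrite lerDl. Qed.

Section Irreducible.
Variables (K : S -> S -> R) (c : R).
Hypothesis K_ge0 : forall x y, 0 <= K x y.
Hypothesis K_diag : forall x, x \in Om -> c <= K x x.
Hypothesis c_gt0 : 0 < c.
Hypothesis K_sym : forall x y, x \in Om -> y \in Om -> 0 < K x y -> 0 < K y x.

Lemma kpow_ge0 t x y : 0 <= kpow Om K t x y.
Proof.
elim: t x y => [|t IH] x y; first by rewrite /= /kid ler0n.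
by rewrite kpowS sumr_ge0 // => z _; rewrite mulr_ge0.
Qed.

Lemma kpowS_ge x y z t : z \in Om ->
  K x z * kpow Om K t z y <= kpow Om K t.+1 x y.
Proof.
move=> zO; rewrite kpowS (bigD1 z) //= lerDl.
by rewrite sumr_ge0 // => u _; rewrite mulr_ge0 ?kpow_ge0.
Qed.

Lemma kpow_diag_gt0 t x : x \in Om -> 0 < kpow Om K t x x.
Proof.
move=> xO; elim: t => [|t IH]; first by rewrite /= /kid eqxx ltr01.
apply: lt_le_trans (kpowS_ge _ _ _ xO).
by rewrite mulr_gt0 // (lt_le_trans c_gt0 (K_diag xO)).
Qed.

(* Lazy steps at the endpoint pad a walk of length [k] to any length [t >= k]. *)
Lemma kwalk_kpow_gt0 k x y t : kwalk Om K k x y -> x \in Om -> (k <= t)%N ->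
  0 < kpow Om K t x y.
Proof.
elim: k x t => [|k IH] x t /=; first by move=> -> yO _; exact: kpow_diag_gt0.
case=> z [zO [xz zy]] xO; case: t => [//|t] kt.
have Kxz : 0 < K x z by case: xz => // /K_sym; apply.
by apply: lt_le_trans (kpowS_ge _ _ _ zO); rewrite mulr_gt0 // IH.
Qed.

Lemma kpow_gt0_diam r x y : diam_le Om K r -> x \in Om -> y \in Om ->
  0 < kpow Om K r x y.
Proof.
by move=> hd xO yO; have [k kr w] := hd x y xO yO; exact: kwalk_kpow_gt0 w xO kr.
Qed.

End Irreducible.

Lemma exists_uniform_lb (f : S -> S -> R) :
  (forall x y, x \in Om -> y \in Om -> 0 < f x y) ->
  exists q : R, [/\ 0 < q, q <= 1 & forall x y, x \in Om -> y \in Om -> q <= f x y].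
Proof.
move=> fpos.
exists (\big[Order.min/1]_(p : S * S | (p.1 \in Om) && (p.2 \in Om)) f p.1 p.2).
split; first by apply: lt_bigmin => // -[x y] /andP[]; exact: fpos.
  exact: bigmin_le_id.
by move=> x y xO yO; apply: (bigmin_le_cond _ (j := (x, y))) => /=; rewrite xO.
Qed.

End FiniteKernels.

Section MetropolisHastings.
Variables (R : realType) (S : finType) (Om : {set S}).
Variables (Q : S -> S -> R) (p L : S -> R) (q : R).
Hypothesis Q_sum : forall x, x \in Om -> \sum_(y in Om) Q x y = 1.
Hypothesis Q_lb : forall x y, x \in Om -> y \in Om -> q <= Q x y.
Hypothesis q_gt0 : 0 < q.
Hypothesis p_gt0 : forall x, x \in Om -> 0 < p x.
Hypothesis L_gt0 : forall x, x \in Om -> 0 < L x.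

Let Q_ge0 x y : x \in Om -> y \in Om -> 0 <= Q x y.
Proof. by move=> xO yO; exact: le_trans (ltW q_gt0) (Q_lb xO yO). Qed.

Let w x := L x * p x.
Let K := mh_kernel Om Q p L 1.
Let Z := \sum_(z in Om) w z.
Let pi := posterior Om p L.

Let w_gt0 x : x \in Om -> 0 < w x.
Proof. by move=> xO; rewrite mulr_gt0 ?L_gt0 ?p_gt0. Qed.

Let w_le_Z x : x \in Om -> w x <= Z.
Proof.
move=> xO; rewrite /Z (bigD1 x) //= lerDl sumr_ge0 // => z /andP[zO _].
exact/ltW/w_gt0.
Qed.

Let Z_gt0 x : x \in Om -> 0 < Z.
Proof. by move=> xO; exact: lt_le_trans (w_gt0 xO) (w_le_Z xO). Qed.

Lemma posterior_ge0 x : x \in Om -> 0 <= pi x.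
Proof. by move=> xO; rewrite divr_ge0 // ltW ?(Z_gt0 xO) ?w_gt0. Qed.

Lemma posterior_sum x : x \in Om -> \sum_(y in Om) pi y = 1.
Proof. by move=> xO; rewrite -big_distrl /= divff // gt_eqF // (Z_gt0 xO). Qed.

Lemma mh_accept1 x y : x \in Om -> y \in Om ->
  mh_accept Q p L 1 x y = Order.min 1 ((Q y x * w y) / (Q x y * w x)).
Proof.
move=> xO yO; rewrite /mh_accept invr1 powRr1; last by rewrite divr_ge0 // ltW ?L_gt0.
by rewrite mulf_div /w; congr (Order.min 1 (_ / _)); ring.
Qed.

Lemma mh_kernel_flow x y : x \in Om -> y \in Om -> x != y ->
  w x * K x y = Order.min (Q x y * w x) (Q y x * w y).
Proof.
move=> xO yO xy; rewrite /K /mh_kernel (negbTE xy) mh_accept1 // mulrA [w x * _]mulrC.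
have [Qxy0|Qxy0] := eqVneq (Q x y) 0.
  rewrite Qxy0 !mul0r; apply/esym/min_idPl.
  by rewrite mulr_ge0 ?Q_ge0 // ltW ?w_gt0.
have Qw_gt0 : 0 < Q x y * w x by rewrite mulr_gt0 ?w_gt0 // lt0r Qxy0 Q_ge0.
by rewrite minr_pMr ?ltW // mulr1 [_ * (_ / _)]mulrC divfK // gt_eqF.
Qed.

Lemma mh_detailed_balance x y : x \in Om -> y \in Om -> w x * K x y = w y * K y x.
Proof.
move=> xO yO; have [<-//|xy] := eqVneq x y.
by rewrite mh_kernel_flow // mh_kernel_flow 1?eq_sym // minC.
Qed.

Lemma mh_stochastic x : x \in Om -> \sum_(y in Om) K x y = 1.
Proof.
move=> xO; rewrite -(Q_sum xO) (bigD1 x) //= [RHS](bigD1 x) //= /K /mh_kernel eqxx.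
rewrite -addrA; congr (_ + _); rewrite -big_split /=; apply: eq_bigr.
by move=> y /andP[_ yx]; rewrite eq_sym (negbTE yx); ring.
Qed.

Lemma mh_stationary y : y \in Om -> \sum_(x in Om) pi x * K x y = pi y.
Proof.
move=> yO; under eq_bigr => x xO do rewrite mulrAC -/(w x) mh_detailed_balance //.
by rewrite -big_distrl /= -big_distrr /= mh_stochastic // mulr1.
Qed.

Lemma mh_kernel_lb x y : x \in Om -> y \in Om -> q * pi y <= K x y.
Proof.
move=> xO yO; have pi_le1 z : z \in Om -> pi z <= 1.
  by move=> zO; rewrite ler_pdivrMr ?(Z_gt0 xO) // mul1r w_le_Z.
have [<-|xy] := eqVneq x y.
  rewrite /K /mh_kernel eqxx; apply: (@le_trans _ _ (Q x x)).
    by apply: le_trans (Q_lb xO xO); rewrite ler_piMr ?(ltW q_gt0) ?pi_le1.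
  rewrite lerDl sumr_ge0 // => z /andP[zO _].
  by rewrite mulr_ge0 ?Q_ge0 // subr_ge0 ge_min lexx.
rewrite -(ler_pM2l (w_gt0 xO)) mh_kernel_flow // le_min; apply/andP; split.
  rewrite mulrC ler_pM2r ?w_gt0 // (le_trans _ (Q_lb xO yO)) //.
  by rewrite ler_piMr ?(ltW q_gt0) ?pi_le1.
have -> : w x * (q * pi y) = q * w y * pi x by rewrite /pi /posterior /w; ring.
apply: le_trans (_ : q * w y <= _).
  by rewrite ler_piMr ?pi_le1 // mulr_ge0 ?(ltW q_gt0) ?ltW ?w_gt0.
by rewrite ler_pM2r ?w_gt0 ?Q_lb.
Qed.

Lemma mh_lazy_tv t x : x \in Om ->
  tv Om (kpow Om (lazify K) t x) pi <= (1 - q / 2) ^+ t.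
Proof.
move=> xO; apply: kpow_tv_doeblin => //.
- by move=> a b aO bO; rewrite mulrAC lazify_ge ?mh_kernel_lb.
- by move=> a aO; rewrite lazify_stochastic ?mh_stochastic.
- by move=> b bO; rewrite lazify_stationary ?mh_stationary.
- exact: posterior_ge0.
- exact: posterior_sum xO.
Qed.

End MetropolisHastings.

Lemma exists_expr_le (R : realType) (a e : R) : 0 <= a < 1 -> 0 < e ->
  exists t : nat, a ^+ t <= e.
Proof.
move=> /andP[a0 a1] e0.
have := @cvg_geometric R 1 a; rewrite ger0_norm // => /(_ a1).
move=> /cvgr0_norm_lt /(_ e e0) [N _ hN]; exists N.
have := hN N (leqnn N); rewrite /= mul1r ger0_norm ?exprn_ge0 //.
exact: ltW.
Qed.

Section TreeStructure.
Variables (d B : nat).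
Local Notation tree := (tree d B).
Local Notation pos := (pos d B).
Local Notation npos := (npos d B).
Implicit Types (T : tree) (i : pos).

Lemma lab_pos T i : lab T i = T i.
Proof. by rewrite /lab valK. Qed.

Lemma lab_out T k : (npos <= k)%N -> lab T k = None.
Proof. by move=> h; rewrite /lab insubF // ltnNge h. Qed.

Lemma tree_ext T1 T2 : (forall k, lab T1 k = lab T2 k) -> T1 = T2.
Proof. by move=> h; apply/ffunP => i; rewrite -!lab_pos. Qed.

Lemma lab_upd T i o k : lab (upd T i o) k = if k == i then o else lab T k.
Proof.
case: (ltnP k npos) => h; last first.
  by rewrite !lab_out //; case: eqP => // ki; move: h; rewrite ki leqNgt ltn_ord.
by rewrite (_ : k = Ordinal h) // lab_pos ffunE -lab_pos.
Qed.

Lemma upd_updK T i o : upd (upd T i o) i (T i) = T.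
Proof.
by apply: tree_ext => k; rewrite !lab_upd; case: eqP => // ->; rewrite lab_pos.
Qed.

Lemma internal_upd T i o k :
  internal (upd T i o) k = if k == i then o != None else internal T k.
Proof. by rewrite /internal lab_upd; case: ifP. Qed.

Lemma internal_lt T k : internal T k -> (k < npos)%N.
Proof. by rewrite /internal; case: ltnP => // h; rewrite lab_out. Qed.

Lemma internal_rule T k : internal T k -> exists rho, lab T k = Some rho.
Proof. by rewrite /internal; case: (lab T k) => // rho; exists rho. Qed.

Section Valid.
Variable T : tree.
Hypothesis vT : valid_tree T.

Lemma valid_internal k : internal T k -> present T k && (k.*2.+1 < npos)%N.
Proof.
case/andP: vT => /andP[_ /forallP wf] _ Tk.
exact: implyP (wf (Ordinal (internal_lt Tk))) Tk.
Qed.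

Lemma valid_lab0 : lab T 0 = None.
Proof. by case/andP: vT => /andP[/eqP]. Qed.

Lemma internal_gt0 k : internal T k -> (0 < k)%N.
Proof. by case: k => //; rewrite /internal valid_lab0. Qed.

Lemma present_lt k : present T k -> (k < npos)%N.
Proof.
case/orP => [/eqP->|/andP[_ /valid_internal/andP[_ lt]]].
  by rewrite /npos (leq_trans _ (leq_pexp2l _ (ltn0Sn _))) ?expn1.
have := odd_double_half k; case: (odd k) => /= e; lia.
Qed.

Lemma valid_cell k : present T k -> exists x, cell T k x.
Proof.
move=> Tk; case/andP: vT => _ /forallP cells.
exact/existsP/(implyP (cells (Ordinal (present_lt Tk)))).
Qed.

(* Splitting twice on the same rule along a path would leave an empty
   grandchild cell. *)
Lemma child_lab_neq i c : internal T i -> internal T c ->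
  c = i.*2 \/ c = i.*2.+1 -> lab T c != lab T i.
Proof.
move=> Ti Tc ec; apply/eqP => e.
have i0 := internal_gt0 Ti.
have c1 : (1 < c)%N by case: ec => ->; lia.
have db0 : (0 < depth_bound d B)%N.
  have /andP[_] := valid_internal Tc; rewrite /npos.
  by case: (depth_bound d B) => //; rewrite expn1; lia.
have [[v t] Ei] := internal_rule Ti.
pose g := if odd c then c.*2 else c.*2.+1.
have [x /forallP hx] : exists x, cell T g x.
  apply: valid_cell; apply/orP; right.
  have -> : g./2 = c by rewrite /g; case: (odd c); lia.
  by rewrite Tc andbT /g; case: (odd c); lia.
have := implyP (hx ord0).
have := implyP (hx (Ordinal (db0 : 1 < (depth_bound d B).+1)%N)).
rewrite /= !expnS expn0 !muln1 !divn1.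
have -> : (g %/ (2 * 2) = i)%N.
  by rewrite /g; case: ec => ->; rewrite /= ?odd_double /= ?odd_double /=; lia.
have -> : (g %/ 2 = c)%N by rewrite /g; case: (odd c); lia.
rewrite e Ei i0 (leq_trans _ c1) //= => /(_ isT) h1 /(_ isT).
by case: ec h1 => Ec; rewrite /g Ec /= ?odd_double /= ?odd_double /=; lia.
Qed.

End Valid.

Lemma cell_mono T T' k x :
  (forall a, lab T' a = lab T a \/ lab T' a = None) -> cell T k x -> cell T' k x.
Proof.
move=> h /forallP H; apply/forallP => j; apply/implyP => a0.
by have := implyP (H j) a0; case: (h (k %/ 2 ^ j.+1)%N) => ->.
Qed.

End TreeStructure.

Section Moves.
Variables (d B : nat).
Local Notation tree := (tree d B).
Local Notation pos := (pos d B).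
Local Notation npos := (npos d B).
Implicit Types (T : tree) (i : pos).

Definition grow_step T T' := exists i rho,
  [/\ i \in grow_nodes T, rho \in grow_rules T i & T' = upd T i (Some rho)].
Definition prune_step T T' := exists2 i, i \in prune_nodes T & T' = upd T i None.
Definition change_step T T' := exists i rho,
  [/\ i \in change_nodes T, rho \in change_rules T i & T' = upd T i (Some rho)].
Definition swap_step T T' := exists2 p, p \in swap_opts T & T' = swapres T p.1 p.2.

Lemma grow_step_valid T T' : grow_step T T' -> valid_tree T'.
Proof. by case=> i [rho [_ + ->]]; rewrite inE. Qed.

Lemma change_step_valid T T' : change_step T T' -> valid_tree T'.
Proof. by case=> i [rho [_ + ->]]; rewrite inE => /andP[]. Qed.

Lemma swap_step_valid T T' : swap_step T T' -> valid_tree T'.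
Proof. by case=> -[i k] + ->; rewrite inE => /and3P[]. Qed.

Lemma prune_step_valid T T' : valid_tree T -> prune_step T T' -> valid_tree T'.
Proof.
move=> vT [i + ->]; rewrite inE => /and3P[Ti Tl Tr].
have int' k : internal (upd T i None) k = (k != i) && internal T k.
  by rewrite internal_upd; case: eqP.
have pres' k : present (upd T i None) k -> present T k.
  by rewrite /present int' => /orP[->|/and3P[-> _ ->]]; rewrite ?orbT.
apply/andP; split; [apply/andP; split|].
- by rewrite lab_upd; case: ifP => _ //; rewrite valid_lab0.
- apply/forallP => k; apply/implyP; rewrite int' => /andP[ki Tk].
  have /andP[pk ->] := valid_internal vT Tk; rewrite andbT.
  move: pk; rewrite /present int'; case/orP => [->//|/andP[k1 ->]].
  rewrite k1 andbT; apply/orP; right; apply/eqP => e.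
  have := odd_double_half k; rewrite e.
  by case: (odd k) => /= E; move: Tk; rewrite -E ?add1n ?add0n ?(negbTE Tr) ?(negbTE Tl).
- apply/forallP => k; apply/implyP => /pres' /(valid_cell vT) [x hx].
  apply/existsP; exists x; apply: cell_mono hx => a.
  by rewrite lab_upd; case: eqP; by [right|left].
Qed.

Lemma grow_step_prune T T' : valid_tree T -> grow_step T T' -> prune_step T' T.
Proof.
move=> vT [i [rho [+ _ ->]]]; rewrite inE => /andP[/andP[pi Ti] _].
have i0 : (0 < i)%N by case/orP: pi => [/eqP->|/andP[]] //; lia.
have Ti0 : T i = None by apply/eqP; move: Ti; rewrite /internal lab_pos negbK.
exists i; last by rewrite -Ti0 upd_updK.
rewrite inE !internal_upd eqxx /= !ifN_eq; try lia.
apply/andP; split; apply/negP => /(valid_internal vT)/andP[+ _]; rewrite /present.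
  by rewrite doubleK (negbTE Ti) andbF orbF; lia.
have -> : (i.*2.+1)./2 = i by lia.
by rewrite (negbTE Ti) andbF orbF; lia.
Qed.

Lemma prune_step_grow T T' : valid_tree T -> prune_step T T' -> grow_step T' T.
Proof.
move=> vT [i iP ->]; have := iP; rewrite inE => /and3P[Ti _ _].
have [rho Trho] := internal_rule Ti; rewrite lab_pos in Trho.
have back : upd (upd T i None) i (Some rho) = T by rewrite -Trho upd_updK.
have rhoG : rho \in grow_rules (upd T i None) i by rewrite inE back.
exists i, rho; split => //; rewrite inE; apply/andP; split; last first.
  by rewrite -lt0n card_gt0; apply/set0Pn; exists rho.
have /andP[pi _] := valid_internal vT Ti.
rewrite /is_leaf internal_upd eqxx andbT; move: pi; rewrite /present internal_upd.
by rewrite ifN_eq //; have := internal_gt0 vT Ti; lia.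
Qed.

Lemma change_step_sym T T' : valid_tree T -> change_step T T' -> change_step T' T.
Proof.
move=> vT [i [rho [+ + ->]]]; rewrite !inE => /andP[Ti _] /andP[rhoi _].
have [a Ta] := internal_rule Ti; rewrite lab_pos in Ta.
have back : upd (upd T i (Some rho)) i (Some a) = T by rewrite -Ta upd_updK.
have aC : a \in change_rules (upd T i (Some rho)) i.
  by rewrite inE back vT andbT ffunE eqxx -Ta eq_sym.
exists i, a; split => //; rewrite inE internal_upd eqxx /=.
by rewrite -lt0n card_gt0; apply/set0Pn; exists a.
Qed.

Definition swap_lab T (i k x : nat) : option (rule d B) :=
  match k with
  | 0 => if x == i then lab T i.*2 else if x == i.*2 then lab T i else lab T x
  | 1 => if x == i then lab T i.*2.+1 else if x == i.*2.+1 then lab T i else lab T x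
  | _ => if x == i then lab T i.*2
         else if (x == i.*2) || (x == i.*2.+1) then lab T i else lab T x
  end.

Lemma lab_swapres T i (k : 'I_3) x : (x < npos)%N ->
  lab (swapres T i k) x = swap_lab T i k x.
Proof. by move=> xn; rewrite (_ : x = Ordinal xn) // lab_pos ffunE -!lab_pos. Qed.

Section Swap.
Variables (T : tree) (i : pos) (k : 'I_3).
Hypotheses (vT : valid_tree T) (ikS : (i, k) \in swap_opts T).

Let Ti : internal T i.
Proof. by move: ikS; rewrite inE => /and3P[]. Qed.

Local Notation same :=
  [&& internal T i.*2, internal T i.*2.+1 & lab T i.*2 == lab T i.*2.+1].

Let k_ok : match nat_of_ord k with
  | 0 => internal T i.*2 && ~~ same
  | 1 => internal T i.*2.+1 && ~~ same
  | _ => same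
  end.
Proof. by move: ikS; rewrite inE => /and3P[]. Qed.

Let i_gt0 : (0 < i)%N := internal_gt0 vT Ti.
Let r_lt : (i.*2.+1 < npos)%N.
Proof. by have /andP[] := valid_internal vT Ti. Qed.
Let i_lt : (i < npos)%N. Proof. lia. Qed.
Let l_lt : (i.*2 < npos)%N. Proof. lia. Qed.
Let li : (i.*2 == i) = false. Proof. by apply/negbTE; lia. Qed.
Let ri : (i.*2.+1 == i) = false. Proof. by apply/negbTE; lia. Qed.
Let rl : (i.*2.+1 == i.*2) = false. Proof. by apply/negbTE; lia. Qed.
Let lr : (i.*2 == i.*2.+1) = false. Proof. by apply/negbTE; lia. Qed.

Lemma swapresK : swapres (swapres T i k) i k = T.
Proof.
apply: tree_ext => x; case: (ltnP x npos) => xn; last by rewrite !lab_out.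
rewrite lab_swapres //; move: k_ok; case: k => [[|[|[|?]]] ?] //= hk;
  rewrite /swap_lab /= !lab_swapres // /swap_lab /= ?eqxx ?li ?ri ?rl ?lr /=.
all: case: eqVneq => [->//|_] /=.
- by case: eqVneq => [->|].
- by case: eqVneq => [->|].
- case/and3P: hk => _ _ /eqP lr_eq.
  by case: eqVneq => [->//|_] /=; case: eqVneq => [->|].
Qed.

Lemma swap_opts_swapres : (i, k) \in swap_opts (swapres T i k).
Proof.
rewrite inE /swap_ok /= swapresK vT /=; move: Ti k_ok; rewrite /internal.
case: k => [[|[|[|?]]] ?] //= Ti';
  rewrite !lab_swapres // /swap_lab /= !eqxx ?li ?ri ?rl ?lr Ti' /=.
- case/andP => -> _ /=; apply/negP => /andP[Tr /eqP E].
  by have := child_lab_neq vT Ti Tr (or_intror erefl); rewrite E eqxx.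
- case/andP => -> _ /=; apply/negP => /andP[Tl /eqP E].
  by have := child_lab_neq vT Ti Tl (or_introl erefl); rewrite E eqxx.
- by case/and3P => -> _ _; rewrite eqxx.
Qed.

End Swap.

Lemma swap_step_sym T T' : valid_tree T -> swap_step T T' -> swap_step T' T.
Proof.
move=> vT [[i k] ikS ->]; exists (i, k); first exact: swap_opts_swapres.
by rewrite swapresK.
Qed.

End Moves.

Section UniformChoice.
Variables (d B : nat) (R : realType).
Local Notation tree := (tree d B).
Variables (I : finType) (T : tree) (A : {set I}).

Lemma unifK_ge0 (K : I -> tree -> R) T' :
  (forall a, a \in A -> 0 <= K a T') -> 0 <= unifK T A K T'.
Proof.
move=> h; rewrite /unifK; case: eqP => _; first by rewrite ler0n.
by rewrite mulr_ge0 ?invr_ge0 ?ler0n // sumr_ge0.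
Qed.

Lemma unifK_sum (K : I -> tree -> R) :
  (forall a, a \in A -> \sum_T' K a T' = 1) -> \sum_T' unifK T A K T' = 1.
Proof.
move=> h; rewrite /unifK; case: eqP => A0.
  by under eq_bigr do rewrite eq_sym; exact: sum_indicator.
rewrite -big_distrr /= exchange_big /= (eq_bigr (fun _ => 1)) //.
by rewrite sumr_const mulVf // pnatr_eq0; exact/eqP.
Qed.

Lemma unifK_gt0P (K : I -> tree -> R) T' :
  0 < unifK T A K T' -> T' = T \/ exists2 a, a \in A & 0 < K a T'.
Proof.
rewrite /unifK; case: eqP => _; first by case: eqP => [->|_]; [left|rewrite ltxx].
move=> h; right; have [//|nh] := pselect (exists2 a, a \in A & 0 < K a T').
move: h; rewrite ltNge => /negP[].
rewrite mulr_ge0_le0 ?invr_ge0 ?ler0n // sumr_le0 // => a aA.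
by rewrite leNgt; apply/negP => Ka; apply: nh; exists a.
Qed.

Lemma unifK_gt0 (K : I -> tree -> R) T' a : a \in A ->
  (forall b, b \in A -> 0 <= K b T') -> 0 < K a T' -> 0 < unifK T A K T'.
Proof.
move=> aA K_ge0 Ka; rewrite /unifK; case: eqP => [/eqP|A0].
  by rewrite cards_eq0 => /eqP A0; rewrite A0 inE in aA.
have A_gt0 : (0 < #|A|)%N by rewrite lt0n; exact/eqP.
rewrite mulr_gt0 ?invr_gt0 ?ltr0n // (bigD1 a) //= ltr_pwDl // sumr_ge0 //.
by move=> b /andP[/K_ge0].
Qed.

Variable f : I -> tree.

Lemma unifK_indicator_ge0 T' : 0 <= unifK T A (fun a T'' => ((f a == T'')%:R : R)) T'.
Proof. by apply: unifK_ge0 => *; rewrite ler0n. Qed.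

Lemma unifK_indicator_sum : \sum_T' unifK T A (fun a T'' => ((f a == T'')%:R : R)) T' = 1.
Proof. by apply: unifK_sum => *; exact: sum_indicator. Qed.

Lemma unifK_indicator_gt0P T' : 0 < unifK T A (fun a T'' => ((f a == T'')%:R : R)) T' ->
  T' = T \/ exists2 a, a \in A & T' = f a.
Proof.
case/unifK_gt0P => [->|[a aA]]; first by left.
by case: eqP => [<-|]; [right; exists a | rewrite ltxx].
Qed.

Lemma unifK_indicator_gt0 a : a \in A ->
  0 < unifK T A (fun a T'' => ((f a == T'')%:R : R)) (f a).
Proof. by move=> aA; apply: (unifK_gt0 aA) => [*|]; rewrite ?ler0n ?eqxx ?ltr01. Qed.

End UniformChoice.

Section MoveProposals.
Variables (d B : nat) (R : realType).
Local Notation tree := (tree d B).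
Implicit Types T : tree.

Lemma growQ_ge0 T T' : 0 <= growQ R T T'.
Proof. by apply: unifK_ge0 => i _; exact: unifK_indicator_ge0. Qed.

Lemma growQ_sum T : \sum_T' growQ R T T' = 1.
Proof. by apply: unifK_sum => i _; exact: unifK_indicator_sum. Qed.

Lemma growQ_gt0P T T' : 0 < growQ R T T' -> T' = T \/ grow_step T T'.
Proof.
by case/unifK_gt0P => [->|[i iG /unifK_indicator_gt0P[->|[rho rG ->]]]];
  [left|left|right; exists i, rho].
Qed.

Lemma grow_step_gt0 T T' : grow_step T T' -> 0 < growQ R T T'.
Proof.
case=> i [rho [iG rG ->]]; rewrite /growQ; apply: (unifK_gt0 _ iG) => [*|].
  exact: unifK_indicator_ge0.
exact: (unifK_indicator_gt0 R T (fun rho => upd T i (Some rho)) rG).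
Qed.

Lemma changeQ_ge0 T T' : 0 <= changeQ R T T'.
Proof. by apply: unifK_ge0 => i _; exact: unifK_indicator_ge0. Qed.

Lemma changeQ_sum T : \sum_T' changeQ R T T' = 1.
Proof. by apply: unifK_sum => i _; exact: unifK_indicator_sum. Qed.

Lemma changeQ_gt0P T T' : 0 < changeQ R T T' -> T' = T \/ change_step T T'.
Proof.
by case/unifK_gt0P => [->|[i iG /unifK_indicator_gt0P[->|[rho rG ->]]]];
  [left|left|right; exists i, rho].
Qed.

Lemma change_step_gt0 T T' : change_step T T' -> 0 < changeQ R T T'.
Proof.
case=> i [rho [iG rG ->]]; rewrite /changeQ; apply: (unifK_gt0 _ iG) => [*|].
  exact: unifK_indicator_ge0.
exact: (unifK_indicator_gt0 R T (fun rho => upd T i (Some rho)) rG).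
Qed.

Lemma pruneQ_ge0 T T' : 0 <= pruneQ R T T'.
Proof. exact: unifK_indicator_ge0. Qed.

Lemma pruneQ_sum T : \sum_T' pruneQ R T T' = 1.
Proof. exact: unifK_indicator_sum. Qed.

Lemma pruneQ_gt0P T T' : 0 < pruneQ R T T' -> T' = T \/ prune_step T T'.
Proof. by case/unifK_indicator_gt0P => [->|[i iP ->]]; [left|right; exists i]. Qed.

Lemma prune_step_gt0 T T' : prune_step T T' -> 0 < pruneQ R T T'.
Proof.
by case=> i iP ->; exact: (unifK_indicator_gt0 R T (fun i => upd T i None) iP).
Qed.

Lemma swapQ_ge0 T T' : 0 <= swapQ R T T'.
Proof. exact: unifK_indicator_ge0. Qed.

Lemma swapQ_sum T : \sum_T' swapQ R T T' = 1.
Proof. exact: unifK_indicator_sum. Qed.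

Lemma swapQ_gt0P T T' : 0 < swapQ R T T' -> T' = T \/ swap_step T T'.
Proof. by case/unifK_indicator_gt0P => [->|[p pS ->]]; [left|right; exists p]. Qed.

Lemma swap_step_gt0 T T' : swap_step T T' -> 0 < swapQ R T T'.
Proof.
by case=> p pS ->; exact: (unifK_indicator_gt0 R T (fun p => swapres T p.1 p.2) pS).
Qed.

End MoveProposals.

Section TreeProposal.
Variables (d B : nat) (R : realType) (pi0 pig pip pic pis : R).
Hypotheses (pi0_gt0 : 0 < pi0) (pig_gt0 : 0 < pig) (pip_gt0 : 0 < pip).
Hypotheses (pic_ge0 : 0 <= pic) (pis_ge0 : 0 <= pis).
Local Notation tree := (tree d B).
Local Notation TQ := (treeQ pi0 pig pip pic pis).
Implicit Types T : tree.

Definition tree_step T T' : Prop := [\/ grow_step T T', prune_step T T',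
  0 < pic /\ change_step T T' | 0 < pis /\ swap_step T T'].

Lemma treeQ_ge0 T T' : 0 <= TQ T T'.
Proof.
rewrite /treeQ; repeat apply: addr_ge0; apply: mulr_ge0;
  rewrite ?ler0n ?growQ_ge0 ?pruneQ_ge0 ?changeQ_ge0 ?swapQ_ge0 //; exact: ltW.
Qed.

Lemma treeQ_diag T : pi0 <= TQ T T.
Proof.
rewrite /treeQ eqxx /= mulr1n mulr1 -!addrA lerDl.
repeat apply: addr_ge0; apply: mulr_ge0;
  rewrite ?growQ_ge0 ?pruneQ_ge0 ?changeQ_ge0 ?swapQ_ge0 //; exact: ltW.
Qed.

Lemma treeQ_sum T : pi0 + pig + pip + pic + pis = 1 -> \sum_T' TQ T T' = 1.
Proof.
move=> <-; rewrite /treeQ !big_split /= -!big_distrr /=.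
rewrite growQ_sum pruneQ_sum changeQ_sum swapQ_sum !mulr1.
under eq_bigr do rewrite eq_sym.
by rewrite (@sum_indicator _ _ predT) // mulr1.
Qed.

Lemma treeQ_gt0 T T' : T' = T \/ tree_step T T' -> 0 < TQ T T'.
Proof.
have t0 : 0 <= pi0 * (T' == T)%:R := mulr_ge0 (ltW pi0_gt0) (ler0n _ _).
have t1 := mulr_ge0 (ltW pig_gt0) (growQ_ge0 R T T').
have t2 := mulr_ge0 (ltW pip_gt0) (pruneQ_ge0 R T T').
have t3 := mulr_ge0 pic_ge0 (changeQ_ge0 R T T').
have t4 := mulr_ge0 pis_ge0 (swapQ_ge0 R T T').
case=> [->|]; first exact: lt_le_trans pi0_gt0 (treeQ_diag T).
rewrite /treeQ; case=> [/(grow_step_gt0 R) g|/(prune_step_gt0 R) p|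
  [c0 /(change_step_gt0 R) c]|[s0 /(swap_step_gt0 R) s]].
- by have := mulr_gt0 pig_gt0 g; lra.
- by have := mulr_gt0 pip_gt0 p; lra.
- by have := mulr_gt0 c0 c; lra.
- by have := mulr_gt0 s0 s; lra.
Qed.

Lemma treeQ_gt0P T T' : 0 < TQ T T' -> T' = T \/ tree_step T T'.
Proof.
have [->|ne] := eqVneq T' T; [by left | move=> pos; right].
have [g|ng] := boolP (0 < growQ R T T').
  by case/growQ_gt0P: g => [/eqP|]; [rewrite (negbTE ne) | exact: Or41].
have [p|np] := boolP (0 < pruneQ R T T').
  by case/pruneQ_gt0P: p => [/eqP|]; [rewrite (negbTE ne) | exact: Or42].
have [c|nc] := boolP (0 < pic * changeQ R T T').
  have [c0 /changeQ_gt0P] := mulr_gt0_nnegP pic_ge0 (changeQ_ge0 R T T') c.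
  by case=> [/eqP|]; [rewrite (negbTE ne) | move=> ?; apply: Or43].
have [s|ns] := boolP (0 < pis * swapQ R T T').
  have [s0 /swapQ_gt0P] := mulr_gt0_nnegP pis_ge0 (swapQ_ge0 R T T') s.
  by case=> [/eqP|]; [rewrite (negbTE ne) | move=> ?; apply: Or44].
move: ng np nc ns pos; rewrite -!leNgt /treeQ (negbTE ne) mulr0 add0r => g p c s.
have : pig * growQ R T T' <= 0 by rewrite pmulr_rle0.
have : pip * pruneQ R T T' <= 0 by rewrite pmulr_rle0.
lra.
Qed.

Lemma tree_step_valid T T' : valid_tree T -> tree_step T T' -> valid_tree T'.
Proof.
by move=> vT [/grow_step_valid|/(prune_step_valid vT)|
  [_ /change_step_valid]|[_ /swap_step_valid]].
Qed.

Lemma tree_step_sym T T' : valid_tree T -> tree_step T T' -> tree_step T' T.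
Proof.
move=> vT [/(grow_step_prune vT) ?|/(prune_step_grow vT) ?|
  [? /(change_step_sym vT) ?]|[? /(swap_step_sym vT) ?]].
- exact: Or42.
- exact: Or41.
- exact: Or43.
- exact: Or44.
Qed.

Lemma treeQ_valid T T' : valid_tree T -> 0 < TQ T T' -> valid_tree T'.
Proof. by move=> vT /treeQ_gt0P[->|/(tree_step_valid vT)]. Qed.

Lemma treeQ_sym T T' : valid_tree T -> 0 < TQ T T' -> 0 < TQ T' T.
Proof.
move=> vT /treeQ_gt0P[->|st]; apply: treeQ_gt0; first by left.
by right; exact: tree_step_sym.
Qed.

End TreeProposal.

Section EnsembleProposal.
Variables (d B m : nat) (R : realType) (pi0 pig pip pic pis : R).
Hypotheses (pi0_gt0 : 0 < pi0) (pig_gt0 : 0 < pig) (pip_gt0 : 0 < pip).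
Hypotheses (pic_ge0 : 0 <= pic) (pis_ge0 : 0 <= pis).
Hypothesis m_gt0 : (0 < m)%N.
Local Notation tree := (tree d B).
Local Notation ens := (ens d B m).
Local Notation TQ := (treeQ pi0 pig pip pic pis).
Local Notation EQ := (@ensQ d B R m pi0 pig pip pic pis).
Local Notation Om := (OmegaTSE d B m).
Implicit Types E : ens.

Local Notation agree_off j E E' := [forall k : 'I_m, (k != j) ==> (E k == E' k)].

Definition set_tree E (j : 'I_m) (T : tree) : ens :=
  [ffun k => if k == j then T else E k].

Lemma set_tree_eq E j T E' :
  (set_tree E j T == E') = agree_off j E E' && (T == E' j).
Proof.
apply/eqP/andP => [<-|[/forallP ag /eqP ->]].
  split; last by rewrite ffunE eqxx.
  by apply/forallP => k; apply/implyP => kj; rewrite ffunE (negbTE kj).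
apply/ffunP => k; rewrite ffunE; case: eqP => [->//|/eqP kj].
exact/eqP/(implyP (ag k) kj).
Qed.

(* Ensembles agreeing with [E] off [j] are in bijection with trees, through
   [set_tree E j]. *)
Lemma sum_agree_off j E (F : tree -> R) :
  \sum_(E' : ens) F (E' j) * (agree_off j E E')%:R = \sum_T' F T'.
Proof.
have F_sum T' : F T' = \sum_(E' : ens) F T' * (set_tree E j T' == E')%:R.
  rewrite (bigD1 (set_tree E j T')) //= eqxx mulr1 big1 ?addr0 // => E' E'j.
  by rewrite eq_sym (negbTE E'j) mulr0.
rewrite [RHS](eq_bigr _ (fun T' _ => F_sum T')) exchange_big /=.
apply: eq_bigr => E' _; under eq_bigr do rewrite set_tree_eq.
case: (agree_off j E E') => /=; last by rewrite mulr0 big1 // => T' _; rewrite mulr0.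
rewrite mulr1 (bigD1 (E' j)) //= eqxx mulr1 big1 ?addr0 // => T' T'j.
by rewrite (negbTE T'j) mulr0.
Qed.

Lemma ensQ_ge0 E E' : 0 <= EQ E E'.
Proof.
rewrite /ensQ mulr_ge0 ?invr_ge0 ?ler0n // sumr_ge0 // => j _.
by rewrite mulr_ge0 ?ler0n // treeQ_ge0 // ltW.
Qed.

Lemma ensQ_out E E' : E \in Om -> E' \notin Om -> EQ E E' = 0.
Proof.
rewrite !inE => /forallP vE /forallPn [k nk].
rewrite /ensQ big1 ?mulr0 // => j _; case: forallP => [ag|_]; last by rewrite mulr0.
have kj : k = j.
  by apply/eqP; apply: contraNT nk => /(implyP (ag k)) /eqP <-; exact: vE.
subst k; have TQ_ge0 : 0 <= TQ (E j) (E' j) by apply: treeQ_ge0.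
apply/eqP; rewrite mulr1 eq_le TQ_ge0 andbT leNgt.
by apply: contra nk; exact: treeQ_valid (vE j).
Qed.

Lemma ensQ_stochastic E : pi0 + pig + pip + pic + pis = 1 ->
  E \in Om -> \sum_(E' in Om) EQ E E' = 1.
Proof.
move=> pi_sum EO.
have -> : \sum_(E' in Om) EQ E E' = \sum_E' EQ E E'.
  rewrite big_mkcond /=; apply: eq_bigr => E' _.
  by case: ifP => // /negbT E'O; rewrite ensQ_out.
rewrite /ensQ -big_distrr /= exchange_big /=.
under eq_bigr => j _ do rewrite (sum_agree_off j E (TQ (E j))) treeQ_sum ?ltW //.
by rewrite sumr_const card_ord mulVf // pnatr_eq0 -lt0n.
Qed.

Lemma ensQ_diag E : pi0 <= EQ E E.
Proof.
have agree_refl j : agree_off j E E by apply/forallP => k; rewrite eqxx implybT.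
rewrite /ensQ; apply: le_trans (_ : m%:R^-1 * \sum_(j < m) pi0 <= _).
  rewrite sumr_const card_ord -[pi0 *+ m]mulr_natl mulrA mulVf ?mul1r //.
  by rewrite pnatr_eq0 -lt0n.
rewrite ler_wpM2l ?invr_ge0 ?ler0n // ler_sum // => j _.
by rewrite agree_refl mulr1 treeQ_diag.
Qed.

Lemma ensQ_sym E E' : E \in Om -> E' \in Om -> 0 < EQ E E' -> 0 < EQ E' E.
Proof.
rewrite !inE => /forallP vE _.
have TQ_ge0 (F G : ens) j : 0 <= TQ (F j) (G j) by apply: treeQ_ge0.
have summand_ge0 (F G : ens) j : 0 <= TQ (F j) (G j) * (agree_off j F G)%:R.
  by rewrite mulr_ge0 ?ler0n.
case/mulr_gt0_nnegP; rewrite ?invr_ge0 ?ler0n ?sumr_ge0 // => m_inv_gt0.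
move=> /lt0r_neq0/eqP/psumr_neq0P[j _|j]; first exact: summand_ge0.
move=> /andP[_ /(mulr_gt0_nnegP (TQ_ge0 _ _ _) (ler0n _ _))[TQ_gt0 ag]].
have ag' : agree_off j E' E.
  move: ag; rewrite ltr0n lt0b => /forallP ag.
  by apply/forallP => k; apply/implyP => kj; rewrite eq_sym (implyP (ag k) kj).
rewrite mulr_gt0 // (bigD1 j) //= ag' mulr1 ltr_pwDl //.
  exact: (treeQ_sym _ _ _ _ _ (vE j)).
by rewrite sumr_ge0 // => k _; exact: summand_ge0.
Qed.

End EnsembleProposal.

Section PositiveDefinite.
Variables (R : realType) (n : nat).

Lemma mulmx_tr_gt0 (v : 'rV[R]_n) : v != 0 -> 0 < (v *m v^T) 0 0.
Proof.
move=> v0; have [k vk] : exists k, v 0 k != 0.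
  apply/existsP; apply: contraR v0 => /existsPn h; apply/eqP/matrixP => i j.
  by rewrite (ord1 i) mxE; apply/eqP; have := h j; rewrite negbK.
rewrite mxE (bigD1 k) //= mxE ltr_pwDl //.
  by rewrite -expr2 exprn_even_gt0 //= ?vk.
by apply: sumr_ge0 => i _; rewrite mxE -expr2 sqr_ge0.
Qed.

(* [t |-> det (c I + t e M)] is a polynomial without roots on [0, 1], since the
   matrix is positive definite there; it is positive at [t = 0], hence at
   [t = 1] by the intermediate value theorem for polynomials. *)
Lemma det_scalar_add_psd_gt0 (c e : R) (M : 'M[R]_n) : 0 < c -> 0 <= e ->
  (forall v : 'rV[R]_n, 0 <= (v *m M *m v^T) 0 0) ->
  0 < \det (c *: 1%:M + e *: M).
Proof.
move=> c0 e0 psd.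
have det_neq0 t : 0 <= t -> \det (c *: 1%:M + t *: (e *: M)) != 0.
  move=> t0; apply/det0P => -[v v0 /(congr1 (fun A => (A *m v^T) 0 0))].
  rewrite mulmxDr -!scalemxAr mulmx1 mulmxDl -!scalemxAl mul0mx.
  move: (mulmx_tr_gt0 v0) (psd v); rewrite !mxE => h1 h2.
  move=> /eqP; apply/negP; rewrite gt_eqF // ltr_pwDl ?pmulr_rgt0 //.
  by rewrite !mulr_ge0.
pose Mp : 'M[{poly R}]_n :=
  \matrix_(i, j) (((c *: 1%:M) i j)%:P + 'X * ((e *: M) i j)%:P).
have Mp_eval t : (\det Mp).[t] = \det (c *: 1%:M + t *: (e *: M)).
  rewrite -horner_evalE -det_map_mx; congr (\det _); apply/matrixP => i j.
  by rewrite !mxE /= horner_evalE hornerD hornerM hornerX !hornerC.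
have p0 : 0 < (\det Mp).[0].
  by rewrite Mp_eval scale0r addr0 scalemx1 det_scalar exprn_gt0.
rewrite -[e *: M]scale1r -Mp_eval ltNge; apply/negP => p1.
have [x /andP[x0 _] /rootP] : exists2 x, 0 <= x <= 1 & root (- \det Mp) x.
  by apply: poly_ivt; rewrite // !hornerN oppr_le0 ltW //= oppr_ge0 p1.
by rewrite hornerN Mp_eval => /eqP; rewrite oppr_eq0; apply/negP; exact: det_neq0.
Qed.

End PositiveDefinite.

Lemma PsiPsiT_psd (R : realType) (d B m n : nat) (E : ens d B m)
    (xd : 'I_n -> covpt d B) (v : 'rV[R]_n) :
  0 <= (v *m PsiPsiT R E xd *m v^T) 0 0.
Proof.
pose a j l i : R := (cell (E j) l (xd i))%:R.
have -> : (v *m PsiPsiT R E xd *m v^T) 0 0 =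
   \sum_(j < m) \sum_(l : pos d B | is_leaf (E j) l) (\sum_(i < n) v 0 i * a j l i) ^+ 2.
  rewrite mxE.
  transitivity (\sum_(k < n) \sum_(i < n) \sum_(j < m)
      \sum_(l : pos d B | is_leaf (E j) l) (v 0 i * a j l i) * (v 0 k * a j l k)).
    apply: eq_bigr => k _; rewrite !mxE big_distrl /=; apply: eq_bigr => i _.
    rewrite !mxE big_distrr big_distrl /=; apply: eq_bigr => j _.
    rewrite big_distrr big_distrl /=; apply: eq_bigr => l _.
    by rewrite /a -mulnb natrM; ring.
  rewrite exchange_big /=.
  under eq_bigr do rewrite exchange_big /=.
  rewrite exchange_big /=; apply: eq_bigr => j _.
  under eq_bigr do rewrite exchange_big /=.
  rewrite exchange_big /=; apply: eq_bigr => l _.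
  rewrite expr2 big_distrl /=; apply: eq_bigr => i _.
  by rewrite big_distrr.
by apply: sumr_ge0 => j _; apply: sumr_ge0 => l _; exact: sqr_ge0.
Qed.

Lemma marglik_gt0 (R : realType) (d B m n : nat) (sigma2 lambda : R) (E : ens d B m)
    (xd : 'I_n -> covpt d B) (yd : 'I_n -> R) :
  0 < sigma2 -> 0 < lambda -> 0 < marglik sigma2 lambda E xd yd.
Proof.
move=> s0 l0; have det_gt0 : 0 < \det (marg_cov sigma2 lambda E xd).
  by apply: det_scalar_add_psd_gt0 => //; [rewrite divr_ge0 // ltW|exact: PsiPsiT_psd].
rewrite !mulr_gt0 ?expR_gt0 // invr_gt0 ?sqrtr_gt0 //.
by rewrite exprn_gt0 // sqrtr_gt0 mulr_gt0 // pi_gt0.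
Qed.

Section BARTplusMixing.
Variables (R : realType) (d B m : nat) (sigma2 lambda pi0 pig pip pic pis : R).
Variables (prior : ens d B m -> R) (r : nat).
Hypotheses (m_gt0 : (0 < m)%N) (sigma2_gt0 : 0 < sigma2) (lambda_gt0 : 0 < lambda).
Hypotheses (pi0_gt0 : 0 < pi0) (pig_gt0 : 0 < pig) (pip_gt0 : 0 < pip).
Hypotheses (pic_ge0 : 0 <= pic) (pis_ge0 : 0 <= pis).
Hypothesis pi_sum : pi0 + pig + pip + pic + pis = 1.
Hypothesis prior_gt0 : forall E, E \in OmegaTSE d B m -> 0 < prior E.
Hypothesis diam_r : diam_le (OmegaTSE d B m) (ensQ pi0 pig pip pic pis) r.
Local Notation Om := (OmegaTSE d B m).
Local Notation Q := (ensQ pi0 pig pip pic pis).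

Lemma ensQ_kpow_gt0 E E' : E \in Om -> E' \in Om -> 0 < kpow Om Q r E E'.
Proof.
apply: (@kpow_gt0_diam _ _ _ _ pi0) => //.
- by move=> *; exact: ensQ_ge0.
- by move=> *; exact: ensQ_diag.
- by move=> *; exact: ensQ_sym.
Qed.

Lemma bartplus_tmix_uniform eps : 0 < eps -> exists2 C : R, 0 < C &
  forall n (xd : 'I_n -> covpt d B) (yd : 'I_n -> R),
    tmix_le Om (bartplus_lazy pi0 pig pip pic pis sigma2 lambda 1 prior r xd yd)
      (bartplus_posterior sigma2 lambda prior xd yd) eps C.
Proof.
move=> eps_gt0; have [q [q_gt0 q_le1 q_le]] := exists_uniform_lb ensQ_kpow_gt0.
have [t rate_t] : exists t : nat, (1 - q / 2) ^+ t <= eps.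
  by apply: exists_expr_le => //; apply/andP; split; lra.
exists t.+1%:R => // n xd yd; exists t; split; first by rewrite ler_nat.
move=> E EO; apply: le_trans rate_t; apply: mh_lazy_tv => //.
- by move=> *; apply: kpow_stochastic => // *; exact: ensQ_stochastic.
- by move=> *; exact: marglik_gt0.
Qed.

End BARTplusMixing.

Unset Implicit Arguments. Set Strict Implicit.
Local Open Scope classical_set_scope.

Theorem theorem7p2
  (R : realType) (d B : nat)
  (* covariate law nu, regression function f*, noise law *)
  (nu : covpt d B -> R) (fstar : covpt d B -> R) (mu : probability R R)
  (* probability space carrying the i.i.d. sample (x_i, eps_i)_i *)
  (dW : measure_display) (W : measurableType dW) (P : probability W R)
  (xs : nat -> W -> covpt d B) (es : nat -> W -> R)
  (* model / algorithm parameters *)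
  (m : nat) (sigma2 lambda : R) (pi0 pig pip pic pis : R)
  (prior : ens d B m -> R) (r : nat) (eps : R) :
  full_support_prob nu ->
  centered_subgaussian mu ->
  iid_design_noise P nu mu xs es ->
  is_additive fstar ->
  (0 < m)%N -> 0 < sigma2 -> 0 < lambda ->
  0 < pi0 -> 0 < pig -> 0 < pip -> 0 <= pic -> 0 <= pis ->
  pi0 + pig + pip + pic + pis = 1 ->
  (forall E, E \in OmegaTSE d B m -> 0 < prior E) ->
  \sum_(E in OmegaTSE d B m) prior E = 1 ->
  diam_le (OmegaTSE d B m) (ensQ pi0 pig pip pic pis) r ->
  0 < eps ->
  (* t_mix(eps) = O_P(1): for every 0 < delta < 1 there are N, C > 0 with
     sup_{n > N} P_n { t_mix(eps) > C } < delta  (outer probability) *)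
  forall delta : R, 0 < delta < 1 ->
  exists (N : nat) (C : R), 0 < C /\
    exists2 s : R, s < delta &
    forall n : nat, (N < n)%N ->
      exists A : set W, [/\ measurable A,
        [set w | ~ tmix_le (OmegaTSE d B m)
                   (bartplus_lazy pi0 pig pip pic pis sigma2 lambda 1 prior r
                      (fun i : 'I_n => xs i w)
                      (fun i : 'I_n => fstar (xs i w) + es i w))
                   (bartplus_posterior sigma2 lambda prior
                      (fun i : 'I_n => xs i w)
                      (fun i : 'I_n => fstar (xs i w) + es i w))
                   eps C] `<=` A
        & (P A <= s%:E)%E].
Proof.
move=> _ _ _ _ m_gt0 s_gt0 l_gt0 pi0_gt0 pig_gt0 pip_gt0 pic_ge0 pis_ge0 pi_sum
  prior_gt0 _ diam_r eps_gt0 delta /andP[delta_gt0 _].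
have [C C_gt0 tmixC] := bartplus_tmix_uniform m_gt0 s_gt0 l_gt0 pi0_gt0 pig_gt0
  pip_gt0 pic_ge0 pis_ge0 pi_sum prior_gt0 diam_r eps_gt0.
exists 0%N, C; split => //; exists 0 => // n _.
exists set0; split => //; last by rewrite measure0.
by move=> w /= []; exact: tmixC.
Qed.
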